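(* Let $\theta,\eta\in[0,\infty)^V$, let $(X(t))_{t\ge0}$ be the solution of $E^{W,\theta,\eta}_V(X)$ driven by the Brownian motion $B$, with hitting times $T$, and let $s\ge0$. Set $$\widetilde W^{(s)}=WK_{s\wedge T}^{-1},\qquad\widetilde\eta^{(s)}=\eta+\widetilde W^{(s)}\big((s\wedge T)\eta\big).$$ Then $(X(t+s))_{t\ge0}$ is (pathwise) the solution of $E^{\widetilde W^{(s)},X(s),\widetilde\eta^{(s)}}_V(X)$ driven by the shifted Brownian motion $(B(s+t)-B(s))_{t\ge0}$; its hitting times are $T-s\wedge T$.
   Context: Let $N\ge1$, $V=\{1,\dots,N\}$, and $W=(W_{i,j})$ a symmetric irreducible matrix with nonnegative entries (diagonal entries may be nonzero). Vectors in $\mathbb R^V$ are identified with diagonal matrices; $K_t=\mathrm{Id}-tW$ for $t\in[0,\infty)^V$; $t\wedge T=(\min(t,T_i))_i$. For a finite set $S$, a symmetric nonnegative matrix $M$ on $S$, and $\vartheta,\kappa\in[0,\infty)^S$, the S.D.E. $E^{M,\vartheta,\kappa}_S(X)$ driven by a standard $|S|$-dimensional Brownian motion $B$ is: $X_i(t)=\vartheta_i+\int_0^t\mathbf 1_{u<T_i}dB_i(u)-\int_0^t\mathbf 1_{u<T_i}((M\psi(u))_i+\kappa_i)du$, $i\in S$, with $T_i=\inf\{t\ge0:X_i(t)=0\}$, $\psi(t)=(\mathrm{Id}-(t\wedge T)M)^{-1}(X(t)+(t\wedge T)\kappa)$; it has a unique pathwise solution for all $t\ge0$. *)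

From Stdlib Require Import Reals.
From mathcomp Require Import all_boot.
Set Implicit Arguments. Unset Strict Implicit. Unset Printing Implicit Defensive.

Local Open Scope R_scope.

(* vectors and matrices indexed by V = 'I_N *)
Definition vec (N : nat) := 'I_N -> R.
Definition mat (N : nat) := 'I_N -> 'I_N -> R.

Definition mxmul N (A B : mat N) : mat N :=
  fun i j => \big[Rplus/R0]_(k < N) (A i k * B k j).
Definition mxapp N (A : mat N) (v : vec N) : vec N :=
  fun i => \big[Rplus/R0]_(k < N) (A i k * v k).
Definition idm N : mat N := fun i j => if i == j then 1 else 0.
Definition diagm N (d : vec N) : mat N := fun i j => if i == j then d i else 0.
Definition mxsub N (A B : mat N) : mat N := fun i j => A i j - B i j.
Definition vadd N (u v : vec N) : vec N := fun i => u i + v i.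
Fixpoint mxpow N (A : mat N) (k : nat) : mat N :=
  match k with O => @idm N | S k' => mxmul A (mxpow A k') end.

Definition is_inv N (A B : mat N) : Prop := mxmul A B = @idm N /\ mxmul B A = @idm N.

Definition irreducible N (W : mat N) : Prop :=
  forall i j : 'I_N, exists k : nat, 0 < mxpow W k i j.

(* times in [0, +infinity]: None encodes +infinity *)
Definition tmin (t : R) (Ti : option R) : R :=
  match Ti with Some tau => Rmin t tau | None => t end.
Definition tminv N (t : R) (T : 'I_N -> option R) : vec N := fun i => tmin t (T i).
Definition ind_lt (u : R) (Ti : option R) : R :=
  match Ti with
  | Some tau => if Rlt_dec u tau then 1 else 0
  | None => 1
  end.
Definition tshift (Ti : option R) (s : R) : option R :=
  match Ti with Some tau => Some (tau - Rmin s tau) | None => None end.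

(* Ti = inf { t >= 0 : f t = 0 }  (inf of the empty set = +infinity) *)
Definition is_hitting_time (f : R -> R) (Ti : option R) : Prop :=
  match Ti with
  | Some tau =>
      (forall t, 0 <= t -> f t = 0 -> tau <= t) /\
      (forall tau', (forall t, 0 <= t -> f t = 0 -> tau' <= t) -> tau' <= tau)
  | None => forall t, 0 <= t -> f t <> 0
  end.

Definition Kmat N (t : vec N) (M : mat N) : mat N := mxsub (@idm N) (mxmul (diagm t) M).

(* Pathwise form of the S.D.E.  The stochastic integral int_0^t 1_{u<T_i} dB_i(u) of the
   indicator of the stochastic interval [0,T_i) is B_i(t /\ T_i) - B_i(0). *)
Definition solves_E N (M : mat N) (theta kappa : vec N) (B : R -> vec N)
    (X : R -> vec N) (T : 'I_N -> option R) : Prop :=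
  (forall i, is_hitting_time (fun t => X t i) (T i)) /\
  exists psi : R -> vec N,
    (forall u, 0 <= u -> exists Kinv : mat N,
        is_inv (Kmat (tminv u T) M) Kinv /\
        psi u = mxapp Kinv (vadd (X u) (fun i => tminv u T i * kappa i))) /\
    (forall (i : 'I_N) (t : R), 0 <= t ->
       exists pr : Riemann_integrable
                     (fun u => ind_lt u (T i) * (mxapp M (psi u) i + kappa i)) 0 t,
         X t i = theta i + (B (tmin t (T i)) i - B 0 i) - RiemannInt pr).

(* With [a = s /\ T] and [T' = T - a], one has [(s + u) /\ T = a + u /\ T'], and the
   resolvent identity [Id - b W K_a^-1 = K_(a+b) K_a^-1] shows that
   [K_a K_(a+b)^-1] inverts [Id - b (W K_a^-1)], the matrix [K] of the restarted
   equation at time [u].  Under this change of matrix the vector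
   [psi~(u) = K_a psi(s + u) - a eta] solves the restarted equation for [psi], and its
   drift [W K_a^-1 psi~ + eta~] equals the original drift [W psi(s + u) + eta].
   Subtracting the integral equation at time [s] from the one at time [s + t] then
   gives the restarted equation.  The hitting times shift because each coordinate
   of the solution is stopped at its hitting time. *)

From Stdlib Require Import Reals Lra Classical FunctionalExtensionality.
From mathcomp Require Import all_boot all_algebra Rstruct.
From Coquelicot Require Coquelicot.
Set Implicit Arguments. Unset Strict Implicit.

Module RiemannIntFacts.
Import Coquelicot.Coquelicot.
Local Open Scope R_scope.

Lemma RiemannInt_shift (f g : R -> R) (s t : R)
    (pr : Riemann_integrable f 0 (t + s)) (prs : Riemann_integrable f 0 s) :
  0 <= s -> 0 <= t -> (forall u, 0 <= u <= t -> g u = f (u + s)) ->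
  exists prg : Riemann_integrable g 0 t, RiemannInt pr = RiemannInt prs + RiemannInt prg.
Proof.
move=> hs ht hg.
have ex_f := ex_RInt_Reals_1 _ _ _ pr.
have ex_fs : ex_RInt f s (t + s) by apply: (ex_RInt_Chasles_2 f 0); [lra | exact: ex_f].
have g_comp : forall u, Rmin 0 t < u < Rmax 0 t -> g u = scal 1 (f (1 * u + s)).
  move=> u; rewrite Rmin_left ?Rmax_right; try lra.
  by move=> hu; rewrite scal_one Rmult_1_l hg //; lra.
have ex_fs' : ex_RInt (fun u => scal 1 (f (1 * u + s))) 0 t.
  by apply: ex_RInt_comp_lin; rewrite Rmult_0_r Rplus_0_l Rmult_1_l.
have ex_g : ex_RInt g 0 t.
  by apply: (ex_RInt_ext _ _ _ _ _ ex_fs') => u /g_comp ->.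
exists (ex_RInt_Reals_0 _ _ _ ex_g); rewrite -!RInt_Reals.
rewrite -(RInt_Chasles f 0 s (t + s)) //; last first.
  by apply: (ex_RInt_Chasles_1 f 0 s (t + s)); [lra | exact: ex_f].
congr (_ + _).
rewrite (RInt_ext _ _ _ _ g_comp) RInt_comp_lin; last first.
  by rewrite Rmult_0_r Rplus_0_l Rmult_1_l.
by rewrite Rmult_0_r Rplus_0_l Rmult_1_l.
Qed.

Lemma RiemannInt_vanishing_after (f : R -> R) (tau t : R)
    (prt : Riemann_integrable f 0 t) (prtau : Riemann_integrable f 0 tau) :
  0 <= tau <= t -> (forall u, tau <= u -> f u = 0) -> RiemannInt prt = RiemannInt prtau.
Proof.
move=> htau hf.
have ex_f := ex_RInt_Reals_1 _ _ _ prt.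
rewrite -!RInt_Reals -(RInt_Chasles f 0 tau t); first last.
- by apply: (ex_RInt_Chasles_2 f 0); [lra | exact: ex_f].
- by apply: (ex_RInt_Chasles_1 f 0 tau t); [lra | exact: ex_f].
rewrite (RInt_ext f (fun _ => 0) tau t) ?RInt_const ?scal_zero_r ?plus_zero_r //.
by move=> u; rewrite Rmin_left; [move=> hu; apply: hf; lra | lra].
Qed.

End RiemannIntFacts.

Import RiemannIntFacts.
Local Open Scope R_scope.

Lemma tmin_shift_add (Ti : option R) (s u : R) : 0 <= s -> 0 <= u ->
  tmin (u + s) Ti = tmin s Ti + tmin u (tshift Ti s).
Proof.
move=> hs hu; case: Ti => [tau|] /=; last lra.
by rewrite /Rmin; repeat case: Rle_dec; lra.
Qed.

Lemma tmin_shift_cases (Ti : option R) (s u : R) : 0 <= u ->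
  tmin s Ti = s \/ tmin u (tshift Ti s) = 0.
Proof.
move=> hu; case: Ti => [tau|] /=; last by left.
by rewrite /Rmin; repeat case: Rle_dec; lra.
Qed.

Lemma ind_lt_shift (Ti : option R) (s u : R) : 0 <= s -> 0 <= u ->
  ind_lt u (tshift Ti s) = ind_lt (u + s) Ti.
Proof.
move=> hs hu; case: Ti => [tau|] //=.
rewrite /Rmin; case: Rle_dec => ?; do 2 case: Rlt_dec => ? /=; lra.
Qed.

Lemma increment_shift (h : R -> R) (Ti : option R) (s t : R) : 0 <= s -> 0 <= t ->
  h (s + tmin t (tshift Ti s)) - h (s + 0) = h (tmin (t + s) Ti) - h (tmin s Ti).
Proof.
move=> hs ht; rewrite tmin_shift_add // Rplus_0_r.
case: (tmin_shift_cases Ti s ht) => ->; first by rewrite Rplus_comm.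
by rewrite !Rplus_0_r; lra.
Qed.

Lemma hitting_time_ge0 (x : R -> R) (tau : R) :
  is_hitting_time x (Some tau) -> 0 <= tau.
Proof. by case=> _; apply. Qed.

Lemma hitting_time_stopped_zero (x : R -> R) (tau t : R) :
  is_hitting_time x (Some tau) -> (forall t, 0 <= t -> x t = x (tmin t (Some tau))) ->
  tau <= t -> x t = 0.
Proof.
move=> [hlow hinf] hstop htt.
have htau : 0 <= tau by apply: hinf.
have stop_after u : tau <= u -> x u = x tau.
  by move=> hu; rewrite hstop /= ?Rmin_right //; lra.
have [z [hz hxz]] : exists z, 0 <= z /\ x z = 0.
  apply: NNPP => hnz.
  suff : tau + 1 <= tau by lra.
  by apply: hinf => z hz hxz; case: hnz; exists z.
by rewrite stop_after // -(stop_after z) //; apply: hlow.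
Qed.

Lemma is_hitting_time_shift (x : R -> R) (Ti : option R) (s : R) :
  0 <= s -> is_hitting_time x Ti -> (forall t, 0 <= t -> x t = x (tmin t Ti)) ->
  is_hitting_time (fun t => x (t + s)) (tshift Ti s).
Proof.
move=> hs; case: Ti => [tau|] /=; last by move=> hnz _ t ht; apply: hnz; lra.
move=> hhit hstop; have [hlow hinf] := hhit.
have hzero := hitting_time_stopped_zero hhit hstop.
case: (Rle_dec tau s) => [hts | hst].
- rewrite Rmin_right // Rminus_diag; split=> [t ht _ | tau' hlow'] //.
  by apply: hlow'; [lra | rewrite Rplus_0_l; apply: hzero].
- rewrite Rmin_left; last lra.
  split=> [t ht hxt | tau' hlow'].
  + by have := hlow (t + s) ltac:(lra) hxt; lra.
  + suff : tau' + s <= tau by lra.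
    apply: hinf => t ht hxt.
    have hts := hlow t ht hxt.
    have := hlow' (t - s) ltac:(lra); rewrite Rplus_comm Rplus_minus; move/(_ hxt); lra.
Qed.

Lemma solves_E_stopped N (M : mat N) (theta kappa : vec N) (B X : R -> vec N)
    (T : 'I_N -> option R) (i : 'I_N) (t : R) :
  solves_E M theta kappa B X T -> 0 <= t -> X t i = X (tmin t (T i)) i.
Proof.
move=> [hhit [psi [_ hint]]] ht.
case hTi : (T i) (hhit i) => [tau|] //= htau.
have htau0 := hitting_time_ge0 htau.
case: (Rle_dec t tau) => [htt | htt]; first by rewrite Rmin_left.
rewrite Rmin_right; last lra.
have [prt ->] := hint i t ht; have [prtau ->] := hint i tau htau0.
have tmin_after r : tau <= r -> tmin r (T i) = tau by rewrite hTi; apply: Rmin_right.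
rewrite !tmin_after; try lra.
rewrite (RiemannInt_vanishing_after prt prtau) // => [|u hu]; first lra.
by rewrite hTi /=; case: Rlt_dec => /= [|_]; [lra | rewrite Rmult_0_l].
Qed.

Lemma integral_equation_shift (x b f g : R -> R) (Ti : option R) (th s t : R) :
  0 <= s -> 0 <= t -> (forall u, 0 <= u <= t -> g u = f (u + s)) ->
  (forall r, 0 <= r -> exists pr : Riemann_integrable (fun u => ind_lt u Ti * f u) 0 r,
      x r = th + (b (tmin r Ti) - b 0) - RiemannInt pr) ->
  exists pr : Riemann_integrable (fun u => ind_lt u (tshift Ti s) * g u) 0 t,
    x (t + s) = x s + (b (s + tmin t (tshift Ti s)) - b s - (b (s + 0) - b s))
                - RiemannInt pr.
Proof.
move=> hs ht hg hint.
have [prts ->] := hint (t + s) ltac:(lra); have [prs ->] := hint s hs.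
have shifted_integrand u : 0 <= u <= t ->
    ind_lt u (tshift Ti s) * g u = ind_lt (u + s) Ti * f (u + s).
  by move=> hu; rewrite ind_lt_shift ?hg //; lra.
have [prg ->] := @RiemannInt_shift _ (fun u => ind_lt u (tshift Ti s) * g u)
  s t prts prs hs ht shifted_integrand.
by exists prg; have := increment_shift b Ti hs ht; lra.
Qed.

Module ResolventAlgebra.
Import GRing.Theory.
Local Open Scope ring_scope.

Section Resolvent.
Variables (R : pzRingType) (n : nat).
Implicit Types (A Bm W Ka Kb P : 'M[R]_n) (x e p : 'cV[R]_n).

Lemma resolvent_identity A Bm W Ka :
  (1%:M - A *m W) *m Ka = 1%:M ->
  1%:M - Bm *m (W *m Ka) = (1%:M - (A + Bm) *m W) *m Ka.
Proof. by move=> hKa; rewrite (mulmxDl A) opprD addrA mulmxBl hKa mulmxA. Qed.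

Lemma resolvent_inverse A Bm W Ka Kb :
  (1%:M - A *m W) *m Ka = 1%:M -> Ka *m (1%:M - A *m W) = 1%:M ->
  (1%:M - (A + Bm) *m W) *m Kb = 1%:M -> Kb *m (1%:M - (A + Bm) *m W) = 1%:M ->
  (1%:M - Bm *m (W *m Ka)) *m ((1%:M - A *m W) *m Kb) = 1%:M /\
  ((1%:M - A *m W) *m Kb) *m (1%:M - Bm *m (W *m Ka)) = 1%:M.
Proof.
move=> hKa hKa' hKb hKb'; rewrite (resolvent_identity Bm hKa); split.
- by rewrite mulmxA -(mulmxA _ Ka) hKa' mulmx1 hKb.
- by rewrite mulmxA -(mulmxA _ Kb) hKb' mulmx1 hKa.
Qed.

Lemma resolvent_shift_vector P A Bm W x e :
  P *m (1%:M - Bm *m W) = 1%:M ->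
  P *m (x + (A + Bm) *m e) - A *m e = P *m (x + Bm *m (e + W *m (A *m e))).
Proof.
move=> hP.
have hAe : A *m e = P *m ((1%:M - Bm *m W) *m (A *m e)) by rewrite mulmxA hP mul1mx.
rewrite {1}hAe -mulmxBr; congr (P *m _).
rewrite mulmxBl mul1mx mulmxDl !mulmxDr -!mulmxA.
by rewrite opprB [A *m e + _]addrC -!addrA (addrC (A *m e)) subrK.
Qed.

Lemma resolvent_shift_drift A W Ka p e :
  Ka *m (1%:M - A *m W) = 1%:M ->
  (W *m Ka) *m ((1%:M - A *m W) *m p - A *m e) + (e + (W *m Ka) *m (A *m e)) =
  W *m p + e.
Proof.
move=> hKa; rewrite mulmxBr !mulmxA -(mulmxA W) hKa mulmx1.
by rewrite addrCA -addrA addNr addr0 addrC.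
Qed.
End Resolvent.
End ResolventAlgebra.

Definition vmul N (a v : vec N) : vec N := fun i => a i * v i.

Definition restart_psi N (W : mat N) (a eta p : vec N) : vec N :=
  fun i => mxapp (Kmat a W) p i - vmul a eta i.
Definition restart_eta N (W Ka : mat N) (a eta : vec N) : vec N :=
  vadd eta (mxapp (mxmul W Ka) (vmul a eta)).

Module MatrixTransfer.
Import GRing.Theory ResolventAlgebra.
Local Open Scope ring_scope.

Section Transfer.
Variable N : nat.
Implicit Types (A Bm : mat N) (u v : vec N).

Definition toM A : 'M[R]_N := \matrix_(i, j) A i j.
Definition toV v : 'cV[R]_N := \col_i v i.

Lemma toM_inj : injective toM.
Proof.
move=> A Bm hAB; apply: functional_extensionality => i.
apply: functional_extensionality => j.
by have := congr1 (fun M : 'M[R]_N => M i j) hAB; rewrite !mxE.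
Qed.

Lemma toV_inj : injective toV.
Proof.
move=> u v huv; apply: functional_extensionality => i.
by have := congr1 (fun M : 'cV[R]_N => M i 0) huv; rewrite !mxE.
Qed.

Lemma toM_mxmul A Bm : toM (mxmul A Bm) = toM A *m toM Bm.
Proof. by apply/matrixP => i j; rewrite !mxE; apply: eq_bigr => k _; rewrite !mxE. Qed.

Lemma toV_mxapp A v : toV (mxapp A v) = toM A *m toV v.
Proof. by apply/matrixP => i j; rewrite !mxE ord1; apply: eq_bigr => k _; rewrite !mxE. Qed.

Lemma toV_vadd u v : toV (vadd u v) = toV u + toV v.
Proof. by apply/matrixP => i j; rewrite !mxE. Qed.

Lemma toV_vmul u v : toV (vmul u v) = toM (diagm u) *m toV v.
Proof.
apply/matrixP => i j; rewrite !mxE ord1 (bigD1 i) //= !mxE /diagm eqxx big1 ?addr0 //.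
by move=> k /negbTE hk; rewrite !mxE eq_sym hk mul0r.
Qed.

Lemma toM_diagm_vadd u v : toM (diagm (vadd u v)) = toM (diagm u) + toM (diagm v).
Proof. by apply/matrixP => i j; rewrite !mxE /diagm /vadd; case: (i == j); rewrite ?addr0. Qed.

Lemma toM_idm : toM (@idm N) = 1%:M.
Proof. by apply/matrixP => i j; rewrite !mxE /idm; case: (i == j). Qed.

Lemma toM_Kmat v A : toM (Kmat v A) = 1%:M - toM (diagm v) *m toM A.
Proof. by rewrite -toM_mxmul -toM_idm; apply/matrixP => i j; rewrite !mxE. Qed.

Lemma is_invE A Bm : is_inv A Bm <-> toM A *m toM Bm = 1%:M /\ toM Bm *m toM A = 1%:M.
Proof.
split=> [[h1 h2] | [h1 h2]]; first by rewrite -!toM_mxmul h1 h2 toM_idm.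
by split; apply: toM_inj; rewrite toM_mxmul toM_idm.
Qed.

Lemma toV_restart_psi W a eta p :
  toV (restart_psi W a eta p) = toM (Kmat a W) *m toV p - toV (vmul a eta).
Proof. by rewrite -toV_mxapp; apply/matrixP => i j; rewrite !mxE. Qed.

End Transfer.

Lemma Kmat_restart_inv N (W Ka Kb : mat N) (a b : vec N) :
  is_inv (Kmat a W) Ka -> is_inv (Kmat (vadd a b) W) Kb ->
  is_inv (Kmat b (mxmul W Ka)) (mxmul (Kmat a W) Kb).
Proof.
rewrite !is_invE !toM_Kmat !toM_mxmul toM_Kmat toM_diagm_vadd => -[? ?] [? ?].
exact: resolvent_inverse.
Qed.

Lemma restart_psiE N (W Ka Kb : mat N) (a b eta x : vec N) :
  is_inv (Kmat a W) Ka -> is_inv (Kmat (vadd a b) W) Kb ->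
  restart_psi W a eta (mxapp Kb (vadd x (vmul (vadd a b) eta))) =
  mxapp (mxmul (Kmat a W) Kb) (vadd x (vmul b (restart_eta W Ka a eta))).
Proof.
move=> hKa hKb; have [_] := proj1 (is_invE _ _) (Kmat_restart_inv hKa hKb).
rewrite toM_Kmat !toM_mxmul => hP; apply: toV_inj.
rewrite toV_restart_psi !toV_mxapp !toV_vadd !toV_vmul toV_vadd toV_mxapp toV_vmul.
by rewrite toM_diagm_vadd !toM_mxmul mulmxA; apply: resolvent_shift_vector.
Qed.

Lemma restart_drift N (W Ka : mat N) (a eta p : vec N) :
  is_inv (Kmat a W) Ka ->
  vadd (mxapp (mxmul W Ka) (restart_psi W a eta p)) (restart_eta W Ka a eta) =
  vadd (mxapp W p) eta.
Proof.
case/is_invE => _ hKa; apply: toV_inj; rewrite toM_Kmat in hKa.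
rewrite /restart_eta !toV_vadd !toV_mxapp toV_restart_psi toV_vmul toM_mxmul toM_Kmat.
exact: resolvent_shift_drift.
Qed.

End MatrixTransfer.

Import MatrixTransfer.

Theorem mainTheorem9 (N : nat) (W : mat N) (theta eta : vec N)
    (B : R -> vec N) (X : R -> vec N) (T : 'I_N -> option R) (s : R) :
  (0 < N)%N ->
  (forall i j, W i j = W j i) ->
  (forall i j, 0 <= W i j) ->
  irreducible W ->
  (forall i, 0 <= theta i) ->
  (forall i, 0 <= eta i) ->
  (forall i, continuity (fun t => B t i)) ->
  solves_E W theta eta B X T ->
  0 <= s ->
  exists Kinv : mat N,
    is_inv (Kmat (tminv s T) W) Kinv /\
    let Wt := mxmul W Kinv in
    let etat := vadd eta (mxapp Wt (fun i => tminv s T i * eta i)) in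
    solves_E Wt (X s) etat (fun t i => B (s + t) i - B s i)
      (fun t => X (t + s)) (fun i => tshift (T i) s).
Proof.
move=> _ _ _ _ _ _ _ hsol hs; have [hhit [psi [hpsi hint]]] := hsol.
have [Ka [hKa _]] := hpsi s hs.
exists Ka; split=> //; cbv zeta; split.
  move=> i; apply: (is_hitting_time_shift hs (hhit i)) => t ht.
  exact: solves_E_stopped hsol ht.
exists (fun u => restart_psi W (tminv s T) eta (psi (u + s))); split=> [u hu | i t ht].
- have [Kb [hKb ->]] := hpsi (u + s) ltac:(lra).
  have tminv_split : tminv (u + s) T = vadd (tminv s T) (tminv u (fun i => tshift (T i) s)).
    by apply: functional_extensionality => i; apply: tmin_shift_add.
  rewrite tminv_split in hKb *; exists (mxmul (Kmat (tminv s T) W) Kb).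
  by split; [apply: Kmat_restart_inv | apply: restart_psiE].
- apply: (@integral_equation_shift (fun r => X r i) (fun r => B r i)
    (fun u => mxapp W (psi u) i + eta i)) => // [u _|]; last exact: hint i.
  exact: (congr1 (fun v => v i) (restart_drift eta (psi (u + s)) hKa)).
Qed.
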